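(* Let $M,N$ be $\lambda\mu$-terms with $\lambda\mu\vdash M=N$. If $\Gamma\vdash M:\delta\mid\Delta$ is derivable in the intersection type assignment system, then $\Gamma\vdash N:\delta\mid\Delta$ is derivable.
   Context: $\lambda\mu$-calculus. Terms and commands: $M::=x\mid\lambda x.M\mid MN\mid\mu\alpha.\mathsf C$ and $\mathsf C::=[\alpha]M$, up to renaming of bound variables and names. Structural substitution $T[\alpha\Leftarrow L]$ replaces, recursively, every subterm $[\alpha]N$ by $[\alpha](N[\alpha\Leftarrow L])L$ and leaves everything else unchanged. $\to_{\beta\mu}$ is the compatible closure of: - $(\lambda x.M)N\to M[N/x]$; - $(\mu\alpha.\mathsf C)N\to\mu\alpha.\mathsf C[\alpha\Leftarrow N]$; - $[\alpha]\mu\beta.\mathsf C\to\mathsf C[\alpha/\beta]$. $\lambda\mu\vdash M=N$ is the equational theory it generates. Types (for a fixed $\omega$-algebraic lattice $R$ with compact elements $\mathcal K(R)$): - $\Lambda_R$: $\rho::=\psi_a\mid\omega\mid\rho\wedge\rho$; - $\Lambda_D$: $\delta::=\rho\mid\kappa\to\rho\mid\omega\mid\delta\wedge\delta$; - $\Lambda_C$: $\kappa::=\delta\times\kappa\mid\omega\mid\kappa\wedge\kappa$. The relations $\le_R,\le_D,\le_C$ are the least reflexive, transitive relations with $\sigma\wedge\tau\le\sigma,\tau$, $\sigma\le\omega$, $\rho\le\sigma,\tau\Rightarrow\rho\le\sigma\wedge\tau$, and additionally: - $\psi_\bot\sim\omega$ and $\psi_{a\sqcup b}\sim\psi_a\wedge\psi_b$;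 - $\le_R\subseteq\le_D$; - $\omega\le_D\omega\to\omega$; - $\psi_a\le_D\omega\to\psi_a\le_D\psi_a$; - $\omega\le_C\omega\times\omega$; - $(\kappa\to\rho_1)\wedge(\kappa\to\rho_2)\le_D\kappa\to(\rho_1\wedge\rho_2)$; - $(\delta_1\times\kappa_1)\wedge(\delta_2\times\kappa_2)\le_C(\delta_1\wedge\delta_2)\times(\kappa_1\wedge\kappa_2)$; - $\to$ is contravariant in $\Lambda_C$ and covariant in $\Lambda_R$; - $\times$ is covariant in both arguments. Type assignment. Bases $\Gamma$ are finite maps from variables to $\Lambda_D$, and contexts $\Delta$ are finite maps from names to $\Lambda_C$. $\Gamma(x)$ and $\Delta(\alpha)$ are $\omega$ outside the domain. The rules are: - (Ax) $\Gamma,x{:}\delta\vdash x:\delta\mid\Delta$. - (Abs) From $\Gamma\vdash M:\kappa\to\rho\mid\Delta$, $\Gamma(x)=\delta$, infer $\Gamma\setminus x\vdash\lambda x.M:(\delta\times\kappa)\to\rho\mid\Delta$. - (App) From $\Gamma\vdash M:(\delta\times\kappa)\to\rho\mid\Delta$ and $\Gamma\vdash N:\delta\mid\Delta$, infer $\Gamma\vdash MN:\kappa\to\rho\mid\Delta$. - (Cmd) From $\Gamma\vdash M:\delta\mid\Delta$, $\Delta(\alpha)=\kappa$, infer $\Gamma\vdash[\alpha]M:\delta\times\kappa\mid\Delta$. - ($\mu$) From $\Gamma\vdash\mathsf C:(\kappa'\to\rho)\times\kappa'\mid\Delta$, $\Delta(\alpha)=\kappa$, infer $\Gamma\vdash\mu\alpha.\mathsf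 C:\kappa\to\rho\mid\Delta\setminus\alpha$. - ($\wedge$) intersection introduction; ($\omega$) every $T$ has type $\omega$; ($\le$) subsumption. Variables in $\Gamma$ and names in $\Delta$ are assumed not bound in the subject. *)

From HB Require Import structures.
From mathcomp Require Import all_boot order.
From Stdlib Require Import Relations.

Set Implicit Arguments.
Unset Strict Implicit.
Unset Printing Implicit Defensive.

(* lambda-mu terms and commands, de Bruijn indices for both variables *)
(* (bound by Lam) and names (bound by Mu).  This realises terms up to *)
(* renaming of bound variables and names.                             *)

Inductive term : Type :=
| Var : nat -> term
| Lam : term -> term
| App : term -> term -> term
| Mu  : cmd -> term
with cmd : Type :=
| Named : nat -> term -> cmd.   (* Named a M  =  [a]M *)

Definition upren (xi : nat -> nat) : nat -> nat :=
  fun n => match n with 0 => 0 | S m => S (xi m) end.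

Fixpoint ren_v (xi : nat -> nat) (t : term) : term :=
  match t with
  | Var x => Var (xi x)
  | Lam M => Lam (ren_v (upren xi) M)
  | App M N => App (ren_v xi M) (ren_v xi N)
  | Mu c => Mu (ren_v_c xi c)
  end
with ren_v_c (xi : nat -> nat) (c : cmd) : cmd :=
  match c with Named a M => Named a (ren_v xi M) end.

Fixpoint ren_n (xi : nat -> nat) (t : term) : term :=
  match t with
  | Var x => Var x
  | Lam M => Lam (ren_n xi M)
  | App M N => App (ren_n xi M) (ren_n xi N)
  | Mu c => Mu (ren_n_c (upren xi) c)
  end
with ren_n_c (xi : nat -> nat) (c : cmd) : cmd :=
  match c with Named a M => Named (xi a) (ren_n xi M) end.

Definition up_v (sigma : nat -> term) : nat -> term :=
  fun n => match n with 0 => Var 0 | S m => ren_v S (sigma m) end.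

Fixpoint subst_v (sigma : nat -> term) (t : term) : term :=
  match t with
  | Var x => sigma x
  | Lam M => Lam (subst_v (up_v sigma) M)
  | App M N => App (subst_v sigma M) (subst_v sigma N)
  | Mu c => Mu (subst_v_c (fun n => ren_n S (sigma n)) c)
  end
with subst_v_c (sigma : nat -> term) (c : cmd) : cmd :=
  match c with Named a M => Named a (subst_v sigma M) end.

(* M[N/x] for x the outermost bound variable (index 0) *)
Definition beta_subst (M N : term) : term :=
  subst_v (fun n => match n with 0 => N | S m => Var m end) M.

(* structural substitution T[a <= L]: every [a]N becomes [a](N[a<=L])L *)
Fixpoint ssub (a : nat) (L : term) (t : term) : term :=
  match t with
  | Var x => Var x
  | Lam M => Lam (ssub a (ren_v S L) M)
  | App M N => App (ssub a L M) (ssub a L N)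
  | Mu c => Mu (ssub_c (S a) (ren_n S L) c)
  end
with ssub_c (a : nat) (L : term) (c : cmd) : cmd :=
  match c with
  | Named b M =>
      if Nat.eqb b a then Named b (App (ssub a L M) L)
      else Named b (ssub a L M)
  end.

(* C[a/b] where b is the name bound by the enclosing Mu (index 0) *)
Definition name_subst (a : nat) (c : cmd) : cmd :=
  ren_n_c (fun i => match i with 0 => a | S j => j end) c.

Inductive step : term -> term -> Prop :=
| st_beta M N : step (App (Lam M) N) (beta_subst M N)
| st_mu c N : step (App (Mu c) N) (Mu (ssub_c 0 (ren_n S N) c))
| st_lam M M' : step M M' -> step (Lam M) (Lam M')
| st_appl M M' N : step M M' -> step (App M N) (App M' N)
| st_appr M N N' : step N N' -> step (App M N) (App M N')
| st_mucong c c' : step_c c c' -> step (Mu c) (Mu c')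
with step_c : cmd -> cmd -> Prop :=
| stc_ren a c : step_c (Named a (Mu c)) (name_subst a c)
| stc_named a M M' : step M M' -> step_c (Named a M) (Named a M').

Definition lm_eq : term -> term -> Prop := clos_refl_sym_trans term step.

(* Types over the compact elements K = K(R) of an omega-algebraic     *)
(* lattice R, presented as a countable join-semilattice with bottom.  *)
(* One syntax, with sort predicates isR / isD / isC carving out       *)
(* Lambda_R subset Lambda_D, and Lambda_C; omega is shared.            *)

Inductive ty (K : Type) : Type :=
| Psi : K -> ty K
| Om : ty K
| Meet : ty K -> ty K -> ty K
| Arr : ty K -> ty K -> ty K
| Times : ty K -> ty K -> ty K.
Arguments Om {K}.

Fixpoint isR {K} (t : ty K) : bool :=
  match t with
  | Psi _ => true
  | Om => true
  | Meet s u => isR s && isR u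
  | _ => false
  end.

Fixpoint isD {K} (t : ty K) : bool :=
  match t with
  | Psi _ => true
  | Om => true
  | Meet s u => isD s && isD u
  | Arr k r => isC k && isR r
  | Times _ _ => false
  end
with isC {K} (t : ty K) : bool :=
  match t with
  | Om => true
  | Meet s u => isC s && isC u
  | Times d k => isD d && isC k
  | _ => false
  end.

Section Subtyping.
Context {disp : Order.disp_t} {K : bJoinSemilatticeType disp}.

Inductive le_R : ty K -> ty K -> Prop :=
| leR_refl s : isR s -> le_R s s
| leR_trans s t u : le_R s t -> le_R t u -> le_R s u
| leR_meetl s t : isR s -> isR t -> le_R (Meet s t) s
| leR_meetr s t : isR s -> isR t -> le_R (Meet s t) t
| leR_om s : isR s -> le_R s Om
| leR_glb r s t : le_R r s -> le_R r t -> le_R r (Meet s t)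
| leR_bot1 : le_R (Psi (Order.bottom : K)) Om
| leR_bot2 : le_R Om (Psi (Order.bottom : K))
| leR_join1 (a b : K) : le_R (Psi (Order.join a b)) (Meet (Psi a) (Psi b))
| leR_join2 (a b : K) : le_R (Meet (Psi a) (Psi b)) (Psi (Order.join a b)).

Inductive le_D : ty K -> ty K -> Prop :=
| leD_refl s : isD s -> le_D s s
| leD_trans s t u : le_D s t -> le_D t u -> le_D s u
| leD_meetl s t : isD s -> isD t -> le_D (Meet s t) s
| leD_meetr s t : isD s -> isD t -> le_D (Meet s t) t
| leD_om s : isD s -> le_D s Om
| leD_glb r s t : le_D r s -> le_D r t -> le_D r (Meet s t)
| leD_R s t : le_R s t -> le_D s t
| leD_omarr : le_D Om (Arr Om Om)
| leD_psiarr (a : K) : le_D (Psi a) (Arr Om (Psi a))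
| leD_arrpsi (a : K) : le_D (Arr Om (Psi a)) (Psi a)
| leD_arrmeet k r1 r2 : isC k -> isR r1 -> isR r2 ->
    le_D (Meet (Arr k r1) (Arr k r2)) (Arr k (Meet r1 r2))
| leD_arr_contra k k' r : le_C k' k -> isR r -> le_D (Arr k r) (Arr k' r)
| leD_arr_co k r r' : isC k -> le_R r r' -> le_D (Arr k r) (Arr k r')
with le_C : ty K -> ty K -> Prop :=
| leC_refl s : isC s -> le_C s s
| leC_trans s t u : le_C s t -> le_C t u -> le_C s u
| leC_meetl s t : isC s -> isC t -> le_C (Meet s t) s
| leC_meetr s t : isC s -> isC t -> le_C (Meet s t) t
| leC_om s : isC s -> le_C s Om
| leC_glb r s t : le_C r s -> le_C r t -> le_C r (Meet s t)
| leC_omtimes : le_C Om (Times Om Om)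
| leC_timesmeet d1 d2 k1 k2 : isD d1 -> isD d2 -> isC k1 -> isC k2 ->
    le_C (Meet (Times d1 k1) (Times d2 k2)) (Times (Meet d1 d2) (Meet k1 k2))
| leC_times_l d d' k : le_D d d' -> isC k -> le_C (Times d k) (Times d' k)
| leC_times_r d k k' : isD d -> le_C k k' -> le_C (Times d k) (Times d k').

(* Type assignment.  Bases Gamma and contexts Delta are finite lists   *)
(* indexed by de Bruijn index; lookup outside the list yields omega.   *)
Inductive typ : seq (ty K) -> seq (ty K) -> term -> ty K -> Prop :=
| T_Ax G D x : typ G D (Var x) (nth Om G x)
| T_Abs G D M dl k r : isD dl ->
    typ (dl :: G) D M (Arr k r) -> typ G D (Lam M) (Arr (Times dl k) r)
| T_App G D M N dl k r :
    typ G D M (Arr (Times dl k) r) -> typ G D N dl -> typ G D (App M N) (Arr k r)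
| T_Mu G D c k k' r : isC k ->
    typc G (k :: D) c (Times (Arr k' r) k') -> typ G D (Mu c) (Arr k r)
| T_Meet G D M s t : typ G D M s -> typ G D M t -> typ G D M (Meet s t)
| T_Om G D M : typ G D M Om
| T_Sub G D M s t : typ G D M s -> le_D s t -> typ G D M t
with typc : seq (ty K) -> seq (ty K) -> cmd -> ty K -> Prop :=
| T_Cmd G D a M dl : typ G D M dl -> typc G D (Named a M) (Times dl (nth Om D a))
| Tc_Meet G D c s t : typc G D c s -> typc G D c t -> typc G D c (Meet s t)
| Tc_Om G D c : typc G D c Om
| Tc_Sub G D c s t : typc G D c s -> le_C s t -> typc G D c t.

End Subtyping.

(* Typability is preserved by each of the three rules in both directions
   (subject reduction and subject expansion) and is compatible with the term
   constructors, hence invariant under lambda-mu equality.  Reduction rests on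
   the substitution lemma and on its analogue for the structural substitution
   M[a <= L].  Expansion rests on their converses: from a typing of M[N/x]
   (resp. M[a <= L]) one types N (resp. L) with the meet of the types of its
   occurrences, and M in the correspondingly enlarged basis (resp. context).
   Subsumption, the only rule that is not syntax directed, is tamed by reading a
   D-type as the meet of its arrows k -> psi_a (psi_a being equivalent to
   omega -> psi_a): subtyping preserves every property of these arrows that is
   antitone in k and in a, holds at psi_bottom and is stable under joins, and
   this yields generation lemmas for abstractions, applications and mu. *)

From HB Require Import structures.
From mathcomp Require Import all_boot order.
From Stdlib Require PeanoNat.
Import Order.LTheory.

Set Implicit Arguments.
Unset Strict Implicit.
Unset Printing Implicit Defensive.

Scheme le_D_min := Minimality for le_D Sort Prop
  with le_C_min := Minimality for le_C Sort Prop.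
Combined Scheme le_DC_min from le_D_min, le_C_min.
Scheme typ_min := Minimality for typ Sort Prop
  with typc_min := Minimality for typc Sort Prop.
Combined Scheme typ_typc_min from typ_min, typc_min.
Scheme step_min := Minimality for step Sort Prop
  with step_c_min := Minimality for step_c Sort Prop.
Combined Scheme step_step_c_min from step_min, step_c_min.
Scheme term_mut_ind := Induction for term Sort Prop
  with cmd_mut_ind := Induction for cmd Sort Prop.
Combined Scheme term_cmd_ind from term_mut_ind, cmd_mut_ind.

(** * Sorts and derived subtyping rules *)

Section Subtyping.
Context {disp : Order.disp_t} {K : bJoinSemilatticeType disp}.
Local Notation T := (ty K).
Implicit Types (s t u d k r : T) (a b : K).

Lemma isR_isD t : isR t -> isD t.
Proof. by elim: t => //= s IHs u IHu /andP[/IHs -> /IHu ->]. Qed.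

Lemma le_R_sort s t : le_R s t -> isR s && isR t.
Proof.
elim=> {s t} //=.
- by move=> s ->.
- by move=> s t u _ /andP[-> _] _ /andP[_ ->].
- by move=> s t -> ->.
- by move=> s t -> ->.
- by move=> s ->.
- by move=> r s t _ /andP[-> ->] _ /andP[_ ->].
Qed.

Lemma le_DC_sort :
  (forall s t, le_D s t -> isD s && isD t) /\
  (forall s t, le_C s t -> isC s && isC t).
Proof.
apply: le_DC_min => //=.
all: repeat match goal with
  | H : is_true (_ && _) |- _ => case/andP: H
  | H : le_R _ _ |- _ => case/andP: (le_R_sort H); clear H
  | |- forall _, _ => move=> ?
  end.
all: by repeat (apply/andP; split); rewrite //= ?isR_isD.
Qed.

Lemma le_D_sort s t : le_D s t -> isD s && isD t.
Proof. exact: le_DC_sort.1. Qed.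

Lemma le_C_sort s t : le_C s t -> isC s && isC t.
Proof. exact: le_DC_sort.2. Qed.

Fixpoint cpt t : K :=
  match t with
  | Psi a => a
  | Meet s u => Order.join (cpt s) (cpt u)
  | _ => Order.bottom
  end.

Lemma le_R_cpt s t : le_R s t -> (cpt t <= cpt s)%O.
Proof.
elim=> {s t} //= [s t u _ st _ tu|s t _ _|s t _ _|r s t _ rs _ rt].
- exact: le_trans tu st.
- exact: leUl.
- exact: leUr.
- by rewrite leUx rs rt.
Qed.

Lemma le_R_Psi a b : (b <= a)%O -> le_R (Psi a) (Psi b).
Proof.
move=> ba; rewrite -(join_r ba).
exact: leR_trans (leR_join1 _ _) (leR_meetl _ _).
Qed.

Lemma le_R_meet s s' t t' : le_R s s' -> le_R t t' -> le_R (Meet s t) (Meet s' t').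
Proof.
move=> ss' tt'; case/andP: (le_R_sort ss') => ? _; case/andP: (le_R_sort tt') => ? _.
by apply: leR_glb; [apply: leR_trans _ ss'; apply: leR_meetl
                  | apply: leR_trans _ tt'; apply: leR_meetr].
Qed.

Lemma le_R_Psi_cpt t : isR t -> le_R t (Psi (cpt t)) /\ le_R (Psi (cpt t)) t.
Proof.
elim: t => //= [a _|_|s IHs u IHu /andP[/IHs[? ?] /IHu[? ?]]].
- by split; apply: leR_refl.
- by split; [apply: leR_bot2 | apply: leR_bot1].
split; first exact: leR_trans (le_R_meet _ _) (leR_join2 _ _).
exact: leR_trans (leR_join1 _ _) (le_R_meet _ _).
Qed.

Lemma le_D_meet s s' t t' : le_D s s' -> le_D t t' -> le_D (Meet s t) (Meet s' t').
Proof.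
move=> ss' tt'; case/andP: (le_D_sort ss') => ? _; case/andP: (le_D_sort tt') => ? _.
by apply: leD_glb; [apply: leD_trans _ ss'; apply: leD_meetl
                  | apply: leD_trans _ tt'; apply: leD_meetr].
Qed.

Lemma le_D_arr k k' r r' : le_C k' k -> le_R r r' -> le_D (Arr k r) (Arr k' r').
Proof.
move=> kk' rr'; case/andP: (le_C_sort kk') => ? _; case/andP: (le_R_sort rr') => ? _.
exact: leD_trans (leD_arr_contra kk' _) (leD_arr_co _ rr').
Qed.

Lemma le_D_arr_cpt k r : isC k -> isR r ->
  le_D (Arr k r) (Arr k (Psi (cpt r))) /\ le_D (Arr k (Psi (cpt r))) (Arr k r).
Proof.
move=> hk /le_R_Psi_cpt[? ?].
by split; apply: le_D_arr => //; apply: leC_refl.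
Qed.

Lemma le_D_Om_arr k : isC k -> le_D Om (Arr k (Psi Order.bottom)).
Proof.
move=> hk; apply: leD_trans leD_omarr _.
by apply: le_D_arr; [apply: leC_om | apply: leR_bot2].
Qed.

Lemma le_D_arr_join k k1 k2 a b : le_C k k1 -> le_C k k2 ->
  le_D (Meet (Arr k1 (Psi a)) (Arr k2 (Psi b))) (Arr k (Psi (Order.join a b))).
Proof.
move=> kk1 kk2; case/andP: (le_C_sort kk1) => hk _.
have Psi_refl (c : K) : le_R (Psi c) (Psi c) by apply: leR_refl.
apply: leD_trans (le_D_meet (le_D_arr kk1 (Psi_refl a)) (le_D_arr kk2 (Psi_refl b))) _.
apply: leD_trans (leD_arr_co hk (leR_join2 a b)).
exact: leD_arrmeet.
Qed.

Lemma le_C_Times d d' k k' : le_D d d' -> le_C k k' -> le_C (Times d k) (Times d' k').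
Proof.
move=> dd' kk'; case/andP: (le_D_sort dd') => _ hd'; case/andP: (le_C_sort kk') => hk _.
exact: leC_trans (leC_times_l dd' hk) (leC_times_r hd' kk').
Qed.

Fixpoint ty_hd t : T :=
  match t with
  | Times d _ => d
  | Meet s u => Meet (ty_hd s) (ty_hd u)
  | _ => Om
  end.

Fixpoint ty_tl t : T :=
  match t with
  | Times _ k => k
  | Meet s u => Meet (ty_tl s) (ty_tl u)
  | _ => Om
  end.

Lemma ty_hd_tl_sort t : isC t -> isD (ty_hd t) && isC (ty_tl t).
Proof.
by elim: t => //= s IHs u IHu /andP[/IHs/andP[-> ->] /IHu/andP[-> ->]].
Qed.

Lemma le_C_hd_tl s t : le_C s t -> le_D (ty_hd s) (ty_hd t) /\ le_C (ty_tl s) (ty_tl t).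
Proof.
have refl u : isC u -> le_D (ty_hd u) (ty_hd u) /\ le_C (ty_tl u) (ty_tl u).
  by case/ty_hd_tl_sort/andP=> ? ?; split; [apply: leD_refl | apply: leC_refl].
elim=> {s t} /=.
- exact: refl.
- move=> s t u _ [st st'] _ [tu tu'].
  by split; [apply: leD_trans st tu | apply: leC_trans st' tu'].
- move=> s t /ty_hd_tl_sort/andP[? ?] /ty_hd_tl_sort/andP[? ?].
  by split; [apply: leD_meetl | apply: leC_meetl].
- move=> s t /ty_hd_tl_sort/andP[? ?] /ty_hd_tl_sort/andP[? ?].
  by split; [apply: leD_meetr | apply: leC_meetr].
- move=> s /ty_hd_tl_sort/andP[? ?].
  by split; [apply: leD_om | apply: leC_om].
- by move=> r s t _ [? ?] _ [? ?]; split; [apply: leD_glb | apply: leC_glb].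
- exact: (refl (Times Om Om)).
- move=> d1 d2 k1 k2 hd1 hd2 hk1 hk2.
  by apply: (refl (Times _ _)); rewrite /= hd1 hd2 hk1 hk2.
- by move=> d d' k dd' hk; split=> //; apply: leC_refl.
- by move=> d k k' hd kk'; split=> //; apply: leD_refl.
Qed.

(** * Arrow components of D-types *)

(* A D-type is equivalent to the meet of the arrows [k -> Psi a] recorded
   here, [Psi a] counting as [Om -> Psi a]. *)
Fixpoint arrows_in (Q : T -> K -> Prop) t : Prop :=
  match t with
  | Psi a => Q Om a
  | Meet s u => arrows_in Q s /\ arrows_in Q u
  | Arr k r => Q k (cpt r)
  | _ => True
  end.

Definition D_closed (P : T -> Prop) :=
  [/\ P Om, forall s t, P s -> P t -> P (Meet s t) & forall s t, le_D s t -> P s -> P t].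

Definition C_closed (P : T -> Prop) :=
  [/\ P Om, forall s t, P s -> P t -> P (Meet s t) & forall s t, le_C s t -> P s -> P t].

Definition arrow_closed (Q : T -> K -> Prop) :=
  [/\ forall k k' a b, le_C k k' -> (b <= a)%O -> Q k' a -> Q k b,
      forall k, isC k -> Q k Order.bottom &
      forall k a b, isC k -> Q k a -> Q k b -> Q k (Order.join a b)].

Lemma arrows_in_impl (Q Q' : T -> K -> Prop) t :
  (forall k a, Q k a -> Q' k a) -> arrows_in Q t -> arrows_in Q' t.
Proof. by move=> QQ'; elim: t => //= [a|s IHs u IHu [/IHs ? /IHu ?]|k _ r _]; auto. Qed.

Lemma arrows_in_R Q t : arrow_closed Q -> isR t -> arrows_in Q t <-> Q Om (cpt t).
Proof.
case=> Qle Qbot Qjoin; elim: t => //= [_|s IHs u IHu /andP[hs hu]].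
  by split=> // _; apply: Qbot.
split=> [[/(IHs hs) Qs /(IHu hu) Qu]|Qsu]; first exact: Qjoin.
by split; [apply/(IHs hs) | apply/(IHu hu)];
  apply: Qle Qsu; rewrite ?leUl ?leUr //; apply: leC_refl.
Qed.

Lemma arrows_in_le Q s t : arrow_closed Q -> le_D s t -> arrows_in Q s -> arrows_in Q t.
Proof.
move=> QC; have [Qle Qbot Qjoin] := QC.
elim=> {s t} //=.
- by move=> s t u _ st _ tu /st/tu.
- by move=> s t _ _ [].
- by move=> s t _ _ [].
- by move=> r s t _ rs _ rt Qr; split; [apply: rs | apply: rt].
- move=> s t st; case/andP: (le_R_sort st) => hs ht.
  move/(arrows_in_R QC hs) => Qs; apply/(arrows_in_R QC ht).
  exact: Qle (leC_refl _) (le_R_cpt st) Qs.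
- by move=> _; apply: Qbot.
- by move=> k r1 r2 hk _ _ [Q1 Q2]; apply: Qjoin.
- by move=> k k' r k'k _; apply: Qle k'k (lexx _).
- by move=> k r r' hk /le_R_cpt rr'; apply: Qle (leC_refl hk) rr'.
Qed.

Lemma arrows_in_self t : isD t -> arrows_in (fun k a => isC k /\ le_D t (Arr k (Psi a))) t.
Proof.
elim: t => //= [a _|s IHs u IHu /andP[hs hu]|k _ r _ /andP[hk hr]].
- by split=> //; apply: leD_psiarr.
- split; [apply: arrows_in_impl (IHs hs) | apply: arrows_in_impl (IHu hu)];
    move=> k a [hk le]; split=> //; apply: leD_trans _ le.
  + exact: leD_meetl.
  + exact: leD_meetr.
- by split=> //; case: (le_D_arr_cpt hk hr).
Qed.

Lemma D_closed_arrows P t : D_closed P -> isD t ->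
  arrows_in (fun k a => P (Arr k (Psi a))) t -> P t.
Proof.
case=> POm PMeet Ple; elim: t => //= [a _|s IHs u IHu /andP[hs hu] []|k _ r _ /andP[hk hr]].
- by apply: Ple; apply: leD_arrpsi.
- by auto.
- by apply: Ple; case: (le_D_arr_cpt hk hr).
Qed.

Lemma arrows_in_D_closed Q : arrow_closed Q -> D_closed (arrows_in Q).
Proof. by move=> QC; split=> // s t; apply: arrows_in_le. Qed.

End Subtyping.

(** * Well-formed bases, inversion and weakening *)

Section Typing.
Context {disp : Order.disp_t} {K : bJoinSemilatticeType disp}.
Local Notation T := (ty K).
Implicit Types (s t d k r : T) (G D : seq T).

Definition wf_basis G := forall x, isD (nth Om G x).
Definition wf_ctx D := forall a, isC (nth Om D a).
Definition le_basis G' G := forall x, le_D (nth Om G' x) (nth Om G x).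
Definition le_ctx D' D := forall a, le_C (nth Om D' a) (nth Om D a).

Lemma wf_basis_all G : all isD G -> wf_basis G.
Proof.
move=> hG x; case: (ltnP x (size G)) => hx; last by rewrite nth_default.
exact: (all_nthP Om hG).
Qed.

Lemma wf_ctx_all D : all isC D -> wf_ctx D.
Proof.
move=> hD a; case: (ltnP a (size D)) => ha; last by rewrite nth_default.
exact: (all_nthP Om hD).
Qed.

Lemma wf_basis_cons d G : isD d -> wf_basis G -> wf_basis (d :: G).
Proof. by move=> ? ? []. Qed.

Lemma wf_ctx_cons k D : isC k -> wf_ctx D -> wf_ctx (k :: D).
Proof. by move=> ? ? []. Qed.

Lemma le_basis_refl G : wf_basis G -> le_basis G G.
Proof. by move=> wfG x; apply: leD_refl. Qed.

Lemma le_ctx_refl D : wf_ctx D -> le_ctx D D.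
Proof. by move=> wfD a; apply: leC_refl. Qed.

Lemma le_basis_cons d' d G' G : le_D d' d -> le_basis G' G -> le_basis (d' :: G') (d :: G).
Proof. by move=> ? ? []. Qed.

Lemma le_ctx_cons k' k D' D : le_C k' k -> le_ctx D' D -> le_ctx (k' :: D') (k :: D).
Proof. by move=> ? ? []. Qed.

Lemma le_basis_wf G' G : le_basis G' G -> wf_basis G.
Proof. by move=> le x; case/andP: (le_D_sort (le x)). Qed.

Lemma le_ctx_wf D' D : le_ctx D' D -> wf_ctx D.
Proof. by move=> le a; case/andP: (le_C_sort (le a)). Qed.

Lemma typ_typc_sort :
  (forall G D M t, typ G D M t -> wf_basis G -> wf_ctx D -> isD t) /\
  (forall G D c t, typc G D c t -> wf_basis G -> wf_ctx D -> isC t).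
Proof.
apply: typ_typc_min => //=.
- move=> G D M dl k r hdl _ IH wfG wfD.
  by case/andP: (IH (wf_basis_cons hdl wfG) wfD) => -> ->; rewrite hdl.
- by move=> G D M N dl k r _ IH _ _ wfG wfD; case/andP: (IH wfG wfD) => /andP[_ ->] ->.
- move=> G D c k k' r hk _ IH wfG wfD.
  by case/andP: (IH wfG (wf_ctx_cons hk wfD)) => /andP[_ ->] _; rewrite hk.
- by move=> G D M s t _ IHs _ IHt wfG wfD; rewrite IHs ?IHt.
- by move=> G D M s t _ IH /le_D_sort/andP[_ ->].
- by move=> G D a M dl _ IH wfG wfD; rewrite IH ?wfD.
- by move=> G D c s t _ IHs _ IHt wfG wfD; rewrite IHs ?IHt.
- by move=> G D c s t _ IH /le_C_sort/andP[_ ->].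
Qed.

Lemma typ_isD G D M t : wf_basis G -> wf_ctx D -> typ G D M t -> isD t.
Proof. by move=> wfG wfD /typ_typc_sort.1; apply. Qed.

Lemma typc_isC G D c t : wf_basis G -> wf_ctx D -> typc G D c t -> isC t.
Proof. by move=> wfG wfD /typ_typc_sort.2; apply. Qed.

Lemma typ_D_closed G D M : D_closed (typ G D M).
Proof. by split=> [|s t|s t st h]; [apply: T_Om | apply: T_Meet | apply: T_Sub h st]. Qed.

Lemma typc_C_closed G D c : C_closed (typc G D c).
Proof. by split=> [|s t|s t st h]; [apply: Tc_Om | apply: Tc_Meet | apply: Tc_Sub h st]. Qed.

(* Inversion modulo [T_Meet], [T_Om] and [T_Sub], the rules that are not
   syntax directed. *)
Lemma typ_var_ind G D x (P : T -> Prop) : D_closed P -> P (nth Om G x) ->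
  forall t, typ G D (Var x) t -> P t.
Proof.
case=> POm PMeet Ple Px t h; remember (Var x) as e eqn:E.
induction h; try discriminate.
- by case: E => ->.
- exact: PMeet (IHh1 Px E) (IHh2 Px E).
- exact: POm.
- exact: Ple H (IHh Px E).
Qed.

Lemma typ_lam_ind G D M (P : T -> Prop) : D_closed P ->
  (forall dl k r, isD dl -> typ (dl :: G) D M (Arr k r) -> P (Arr (Times dl k) r)) ->
  forall t, typ G D (Lam M) t -> P t.
Proof.
case=> POm PMeet Ple Phead t h; remember (Lam M) as e eqn:E.
induction h; try discriminate.
- by case: E => ?; subst; apply: Phead.
- exact: PMeet (IHh1 Phead E) (IHh2 Phead E).
- exact: POm.
- exact: Ple H (IHh Phead E).
Qed.

Lemma typ_app_ind G D M N (P : T -> Prop) : D_closed P ->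
  (forall dl k r, typ G D M (Arr (Times dl k) r) -> typ G D N dl -> P (Arr k r)) ->
  forall t, typ G D (App M N) t -> P t.
Proof.
case=> POm PMeet Ple Phead t h; remember (App M N) as e eqn:E.
induction h; try discriminate.
- by case: E => ? ?; subst; apply: Phead; eassumption.
- exact: PMeet (IHh1 Phead E) (IHh2 Phead E).
- exact: POm.
- exact: Ple H (IHh Phead E).
Qed.

Lemma typ_mu_ind G D c (P : T -> Prop) : D_closed P ->
  (forall k k' r, isC k -> typc G (k :: D) c (Times (Arr k' r) k') -> P (Arr k r)) ->
  forall t, typ G D (Mu c) t -> P t.
Proof.
case=> POm PMeet Ple Phead t h; remember (Mu c) as e eqn:E.
induction h; try discriminate.
- by case: E => ?; subst; apply: Phead; eassumption.
- exact: PMeet (IHh1 Phead E) (IHh2 Phead E).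
- exact: POm.
- exact: Ple H (IHh Phead E).
Qed.

Lemma typc_named_ind G D a M (P : T -> Prop) : C_closed P ->
  (forall dl, typ G D M dl -> P (Times dl (nth Om D a))) ->
  forall t, typc G D (Named a M) t -> P t.
Proof.
case=> POm PMeet Ple Phead t h; remember (Named a M) as e eqn:E.
induction h; try discriminate.
- by case: E => ? ?; subst; apply: Phead.
- exact: PMeet (IHh1 Phead E) (IHh2 Phead E).
- exact: POm.
- exact: Ple H (IHh Phead E).
Qed.

Lemma typ_var_le G D x t : wf_basis G -> typ G D (Var x) t -> le_D (nth Om G x) t.
Proof.
move=> wfG; move: t; apply: typ_var_ind; last exact: leD_refl.
by split=> [|s u|s u su]; [apply: leD_om | apply: leD_glb | move/leD_trans; apply].
Qed.

Lemma typc_named_inv G D a M t : wf_basis G -> wf_ctx D -> typc G D (Named a M) t ->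
  exists2 d, typ G D M d & le_C (Times d (nth Om D a)) t.
Proof.
move=> wfG wfD; move: t; apply: typc_named_ind; last first.
  by move=> d Md; exists d => //; apply: leC_refl; rewrite /= (typ_isD wfG wfD Md) wfD.
split=> [|s u [d1 M1 le1] [d2 M2 le2]|s u su [d Md le]].
- by exists Om; [apply: T_Om | apply: leC_om; rewrite /= wfD].
- exists (Meet d1 d2); first exact: T_Meet.
  have hd1 := typ_isD wfG wfD M1; have hd2 := typ_isD wfG wfD M2.
  by apply: leC_glb; [apply: leC_trans _ le1 | apply: leC_trans _ le2];
    apply: leC_times_l => //; [apply: leD_meetl | apply: leD_meetr].
- by exists d => //; apply: leC_trans le su.
Qed.

Lemma typ_typc_weaken :
  (forall G D M t, typ G D M t ->
     forall G' D', le_basis G' G -> le_ctx D' D -> typ G' D' M t) /\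
  (forall G D c t, typc G D c t ->
     forall G' D', le_basis G' G -> le_ctx D' D -> typc G' D' c t).
Proof.
apply: typ_typc_min.
- by move=> G D x G' D' leG _; apply: T_Sub (T_Ax _ _ _) (leG x).
- move=> G D M dl k r hdl _ IH G' D' leG leD.
  exact: T_Abs hdl (IH _ _ (le_basis_cons (leD_refl hdl) leG) leD).
- move=> G D M N dl k r _ IHM _ IHN G' D' leG leD.
  exact: T_App (IHM _ _ leG leD) (IHN _ _ leG leD).
- move=> G D c k k' r hk _ IH G' D' leG leD.
  exact: T_Mu hk (IH _ _ leG (le_ctx_cons (leC_refl hk) leD)).
- by move=> G D M s t _ IHs _ IHt G' D' leG leD; apply: T_Meet; [apply: IHs | apply: IHt].
- by move=> *; apply: T_Om.
- by move=> G D M s t _ IH st G' D' leG leD; apply: T_Sub (IH _ _ leG leD) st.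
- move=> G D a M dl hM IH G' D' leG leD; apply: Tc_Sub (T_Cmd a (IH _ _ leG leD)) _.
  exact: leC_times_r (typ_isD (le_basis_wf leG) (le_ctx_wf leD) hM) (leD a).
- by move=> G D c s t _ IHs _ IHt G' D' leG leD; apply: Tc_Meet; [apply: IHs | apply: IHt].
- by move=> *; apply: Tc_Om.
- by move=> G D c s t _ IH st G' D' leG leD; apply: Tc_Sub (IH _ _ leG leD) st.
Qed.

Lemma typ_weaken G' D' G D M t :
  le_basis G' G -> le_ctx D' D -> typ G D M t -> typ G' D' M t.
Proof. by move=> leG leD /typ_typc_weaken.1; apply. Qed.

Lemma typc_weaken G' D' G D c t :
  le_basis G' G -> le_ctx D' D -> typc G D c t -> typc G' D' c t.
Proof. by move=> leG leD /typ_typc_weaken.2; apply. Qed.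

(** * Renaming and substitution *)

Lemma typ_typc_ren_v :
  (forall G D M t, typ G D M t -> forall G' xi,
     (forall x, le_D (nth Om G' (xi x)) (nth Om G x)) -> typ G' D (ren_v xi M) t) /\
  (forall G D c t, typc G D c t -> forall G' xi,
     (forall x, le_D (nth Om G' (xi x)) (nth Om G x)) -> typc G' D (ren_v_c xi c) t).
Proof.
apply: typ_typc_min => /=.
- by move=> G D x G' xi leG; apply: T_Sub (T_Ax _ _ _) (leG x).
- move=> G D M dl k r hdl _ IH G' xi leG; apply: (T_Abs hdl (IH _ _ _)).
  by case=> [|x] /=; [apply: leD_refl | apply: leG].
- move=> G D M N dl k r _ IHM _ IHN G' xi leG.
  exact: T_App (IHM _ _ leG) (IHN _ _ leG).
- by move=> G D c k k' r hk _ IH G' xi leG; apply: T_Mu hk (IH _ _ leG).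
- by move=> G D M s t _ IHs _ IHt G' xi leG; apply: T_Meet; [apply: IHs | apply: IHt].
- by move=> *; apply: T_Om.
- by move=> G D M s t _ IH st G' xi leG; apply: T_Sub (IH _ _ leG) st.
- by move=> G D a M dl _ IH G' xi leG; apply: T_Cmd (IH _ _ leG).
- by move=> G D c s t _ IHs _ IHt G' xi leG; apply: Tc_Meet; [apply: IHs | apply: IHt].
- by move=> *; apply: Tc_Om.
- by move=> G D c s t _ IH st G' xi leG; apply: Tc_Sub (IH _ _ leG) st.
Qed.

Lemma typ_typc_ren_n :
  (forall G D M t, typ G D M t -> wf_basis G -> forall D' xi,
     (forall a, le_C (nth Om D' (xi a)) (nth Om D a)) -> typ G D' (ren_n xi M) t) /\
  (forall G D c t, typc G D c t -> wf_basis G -> forall D' xi,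
     (forall a, le_C (nth Om D' (xi a)) (nth Om D a)) -> typc G D' (ren_n_c xi c) t).
Proof.
apply: typ_typc_min => /=.
- by move=> *; apply: T_Ax.
- move=> G D M dl k r hdl _ IH wfG D' xi leD.
  exact: T_Abs hdl (IH (wf_basis_cons hdl wfG) _ _ leD).
- move=> G D M N dl k r _ IHM _ IHN wfG D' xi leD.
  exact: T_App (IHM wfG _ _ leD) (IHN wfG _ _ leD).
- move=> G D c k k' r hk _ IH wfG D' xi leD; apply: (T_Mu hk (IH wfG _ _ _)).
  by case=> [|a] /=; [apply: leC_refl | apply: leD].
- by move=> G D M s t _ IHs _ IHt wfG D' xi leD; apply: T_Meet; [apply: IHs | apply: IHt].
- by move=> *; apply: T_Om.
- by move=> G D M s t _ IH st wfG D' xi leD; apply: T_Sub (IH wfG _ _ leD) st.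
- move=> G D a M dl hM IH wfG D' xi leD; apply: Tc_Sub (T_Cmd _ (IH wfG _ _ leD)) _.
  have wfD a' : isC (nth Om D a') by case/andP: (le_C_sort (leD a')).
  exact: leC_times_r (typ_isD wfG wfD hM) (leD a).
- by move=> G D c s t _ IHs _ IHt wfG D' xi leD; apply: Tc_Meet; [apply: IHs | apply: IHt].
- by move=> *; apply: Tc_Om.
- by move=> G D c s t _ IH st wfG D' xi leD; apply: Tc_Sub (IH wfG _ _ leD) st.
Qed.

Lemma typ_typc_ren_v_inv :
  (forall M G G' D xi t, (forall x, le_D (nth Om G x) (nth Om G' (xi x))) ->
     typ G' D (ren_v xi M) t -> typ G D M t) /\
  (forall c G G' D xi t, (forall x, le_D (nth Om G x) (nth Om G' (xi x))) ->
     typc G' D (ren_v_c xi c) t -> typc G D c t).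
Proof.
apply: term_cmd_ind => /=.
- move=> x G G' D xi t leG; move: t; apply: typ_var_ind; first exact: typ_D_closed.
  exact: T_Sub (T_Ax _ _ _) (leG x).
- move=> M IH G G' D xi t leG; move: t; apply: typ_lam_ind; first exact: typ_D_closed.
  move=> dl k r hdl hM; apply: (T_Abs hdl (IH (dl :: G) _ _ _ _ _ hM)).
  by case=> [|x] /=; [apply: leD_refl | apply: leG].
- move=> M IHM N IHN G G' D xi t leG; move: t; apply: typ_app_ind; first exact: typ_D_closed.
  by move=> dl k r /(IHM _ _ _ _ _ leG) hM /(IHN _ _ _ _ _ leG); apply: T_App.
- move=> c IH G G' D xi t leG; move: t; apply: typ_mu_ind; first exact: typ_D_closed.
  by move=> k k' r hk /(IH _ _ _ _ _ leG); apply: T_Mu.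
- move=> a M IH G G' D xi t leG; move: t; apply: typc_named_ind; first exact: typc_C_closed.
  by move=> dl /(IH _ _ _ _ _ leG); apply: T_Cmd.
Qed.

Lemma typ_typc_ren_n_inv :
  (forall M G D D' xi t, wf_basis G -> wf_ctx D' ->
     (forall a, le_C (nth Om D a) (nth Om D' (xi a))) ->
     typ G D' (ren_n xi M) t -> typ G D M t) /\
  (forall c G D D' xi t, wf_basis G -> wf_ctx D' ->
     (forall a, le_C (nth Om D a) (nth Om D' (xi a))) ->
     typc G D' (ren_n_c xi c) t -> typc G D c t).
Proof.
apply: term_cmd_ind => /=.
- move=> x G D D' xi t _ _ _; move: t.
  by apply: typ_var_ind; [apply: typ_D_closed | apply: T_Ax].
- move=> M IH G D D' xi t wfG wfD' leD; move: t; apply: typ_lam_ind; first exact: typ_D_closed.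
  by move=> dl k r hdl /(IH _ _ _ _ _ (wf_basis_cons hdl wfG) wfD' leD); apply: T_Abs.
- move=> M IHM N IHN G D D' xi t wfG wfD' leD; move: t.
  apply: typ_app_ind; first exact: typ_D_closed.
  move=> dl k r /(IHM _ _ _ _ _ wfG wfD' leD) hM /(IHN _ _ _ _ _ wfG wfD' leD) hN.
  exact: T_App hM hN.
- move=> c IH G D D' xi t wfG wfD' leD; move: t; apply: typ_mu_ind; first exact: typ_D_closed.
  move=> k k' r hk hc.
  apply: (T_Mu hk (IH G (k :: D) _ _ _ wfG (wf_ctx_cons hk wfD') _ hc)).
  by case=> [|a] /=; [apply: leC_refl | apply: leD].
- move=> a M IH G D D' xi t wfG wfD' leD; move: t; apply: typc_named_ind.
    exact: typc_C_closed.
  move=> dl hM; apply: Tc_Sub (T_Cmd a (IH _ _ _ _ _ wfG wfD' leD hM)) _.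
  exact: leC_times_r (typ_isD wfG wfD' hM) (leD a).
Qed.

Lemma typ_shift_v d G D M t : wf_basis G -> typ G D M t -> typ (d :: G) D (ren_v S M) t.
Proof.
by move=> wfG hM; apply: (typ_typc_ren_v.1 _ _ _ _ hM) => x; apply: leD_refl (wfG x).
Qed.

Lemma typ_shift_n k G D M t : wf_basis G -> wf_ctx D -> typ G D M t ->
  typ G (k :: D) (ren_n S M) t.
Proof.
by move=> wfG wfD hM; apply: (typ_typc_ren_n.1 _ _ _ _ hM wfG) => a; apply: leC_refl (wfD a).
Qed.

Lemma typ_shift_v_inv d G D M t : wf_basis G -> typ (d :: G) D (ren_v S M) t -> typ G D M t.
Proof. by move=> wfG; apply: typ_typc_ren_v_inv.1 => x; apply: leD_refl (wfG x). Qed.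

Lemma typ_shift_n_inv k G D M t : wf_basis G -> wf_ctx D -> isC k ->
  typ G (k :: D) (ren_n S M) t -> typ G D M t.
Proof.
move=> wfG wfD hk; apply: typ_typc_ren_n_inv.1 => //; first exact: wf_ctx_cons.
by move=> a; apply: leC_refl (wfD a).
Qed.

Definition typ_env G D (sigma : nat -> term) Gs := forall x, typ G D (sigma x) (nth Om Gs x).

Lemma typ_typc_subst :
  (forall Gs D M t, typ Gs D M t -> forall G sigma, wf_basis G -> wf_ctx D ->
     typ_env G D sigma Gs -> typ G D (subst_v sigma M) t) /\
  (forall Gs D c t, typc Gs D c t -> forall G sigma, wf_basis G -> wf_ctx D ->
     typ_env G D sigma Gs -> typc G D (subst_v_c sigma c) t).
Proof.
apply: typ_typc_min => /=.
- by move=> Gs D x G sigma _ _; apply.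
- move=> Gs D M dl k r hdl _ IH G sigma wfG wfD hs.
  apply: (T_Abs hdl (IH _ _ (wf_basis_cons hdl wfG) wfD _)).
  by case=> [|x] /=; [apply: T_Ax | apply: typ_shift_v wfG (hs x)].
- move=> Gs D M N dl k r _ IHM _ IHN G sigma wfG wfD hs.
  exact: T_App (IHM _ _ wfG wfD hs) (IHN _ _ wfG wfD hs).
- move=> Gs D c k k' r hk _ IH G sigma wfG wfD hs.
  apply: (T_Mu hk (IH _ _ wfG (wf_ctx_cons hk wfD) _)) => x.
  exact: typ_shift_n wfG wfD (hs x).
- move=> Gs D M s t _ IHs _ IHt G sigma wfG wfD hs.
  by apply: T_Meet; [apply: IHs | apply: IHt].
- by move=> *; apply: T_Om.
- by move=> Gs D M s t _ IH st G sigma wfG wfD hs; apply: T_Sub (IH _ _ wfG wfD hs) st.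
- by move=> Gs D a M dl _ IH G sigma wfG wfD hs; apply: T_Cmd (IH _ _ wfG wfD hs).
- move=> Gs D c s t _ IHs _ IHt G sigma wfG wfD hs.
  by apply: Tc_Meet; [apply: IHs | apply: IHt].
- by move=> *; apply: Tc_Om.
- by move=> Gs D c s t _ IH st G sigma wfG wfD hs; apply: Tc_Sub (IH _ _ wfG wfD hs) st.
Qed.

Definition meet_basis G1 G2 :=
  mkseq (fun i => Meet (nth Om G1 i) (nth Om G2 i)) (maxn (size G1) (size G2)).

Lemma nth_meet_basis G1 G2 i :
  nth Om (meet_basis G1 G2) i = Meet (nth Om G1 i) (nth Om G2 i) \/
  [/\ nth Om (meet_basis G1 G2) i = Om, nth Om G1 i = Om & nth Om G2 i = Om].
Proof.
rewrite /meet_basis; case: (ltnP i (maxn (size G1) (size G2))) => hi.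
  by left; rewrite nth_mkseq.
move: (hi); rewrite geq_max => /andP[h1 h2].
by right; rewrite !nth_default ?size_mkseq.
Qed.

Lemma meet_basis_wf G1 G2 : wf_basis G1 -> wf_basis G2 -> wf_basis (meet_basis G1 G2).
Proof.
by move=> wf1 wf2 i; case: (nth_meet_basis G1 G2 i) => [->|[-> _ _]] //=; rewrite wf1 wf2.
Qed.

Lemma le_meet_basisl G1 G2 : wf_basis G1 -> wf_basis G2 -> le_basis (meet_basis G1 G2) G1.
Proof.
move=> wf1 wf2 i; case: (nth_meet_basis G1 G2 i) => [->|[-> -> _]].
  exact: leD_meetl.
exact: leD_refl.
Qed.

Lemma le_meet_basisr G1 G2 : wf_basis G1 -> wf_basis G2 -> le_basis (meet_basis G1 G2) G2.
Proof.
move=> wf1 wf2 i; case: (nth_meet_basis G1 G2 i) => [->|[-> _ ->]].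
  exact: leD_meetr.
exact: leD_refl.
Qed.

Lemma typ_env_meet G D sigma G1 G2 :
  typ_env G D sigma G1 -> typ_env G D sigma G2 -> typ_env G D sigma (meet_basis G1 G2).
Proof.
move=> h1 h2 i; case: (nth_meet_basis G1 G2 i) => [->|[-> _ _]].
  exact: T_Meet.
exact: T_Om.
Qed.

Definition basis_antitone (J : seq T -> Prop) :=
  forall Gs Gs', le_basis Gs' Gs -> J Gs -> J Gs'.

Lemma typ_basis_antitone D M t : wf_ctx D -> basis_antitone (fun Gs => typ Gs D M t).
Proof. by move=> wfD Gs Gs' le; apply: typ_weaken le (le_ctx_refl wfD). Qed.

Lemma typc_basis_antitone D c t : wf_ctx D -> basis_antitone (fun Gs => typc Gs D c t).
Proof. by move=> wfD Gs Gs' le; apply: typc_weaken le (le_ctx_refl wfD). Qed.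

Definition ex_env G D sigma (J : seq T -> Prop) :=
  exists Gs, [/\ wf_basis Gs, typ_env G D sigma Gs & J Gs].

Lemma ex_env_pair G D sigma (J1 J2 : seq T -> Prop) :
  basis_antitone J1 -> basis_antitone J2 ->
  ex_env G D sigma J1 -> ex_env G D sigma J2 -> ex_env G D sigma (fun Gs => J1 Gs /\ J2 Gs).
Proof.
move=> anti1 anti2 [G1 [wf1 h1 J1G1]] [G2 [wf2 h2 J2G2]].
exists (meet_basis G1 G2); split; [exact: meet_basis_wf | exact: typ_env_meet |].
split; [apply: anti1 J1G1 | apply: anti2 J2G2].
  exact: le_meet_basisl.
exact: le_meet_basisr.
Qed.

Lemma ex_env_typ_closed G D sigma M : wf_ctx D ->
  D_closed (fun t => ex_env G D sigma (fun Gs => typ Gs D M t)).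
Proof.
move=> wfD; have anti t := typ_basis_antitone (M := M) (t := t) wfD.
split=> [|s t hs ht|s t st [Gs [wfGs hs hM]]].
- exists [::]; split=> [x|x|]; rewrite ?nth_nil //; exact: T_Om.
- have [Gs [? ? []]] := ex_env_pair (anti s) (anti t) hs ht.
  by exists Gs; split=> //; apply: T_Meet.
- by exists Gs; split=> //; apply: T_Sub hM st.
Qed.

Lemma ex_env_typc_closed G D sigma c : wf_ctx D ->
  C_closed (fun t => ex_env G D sigma (fun Gs => typc Gs D c t)).
Proof.
move=> wfD; have anti t := typc_basis_antitone (c := c) (t := t) wfD.
split=> [|s t hs ht|s t st [Gs [wfGs hs hc]]].
- exists [::]; split=> [x|x|]; rewrite ?nth_nil //; [exact: T_Om | exact: Tc_Om].
- have [Gs [? ? []]] := ex_env_pair (anti s) (anti t) hs ht.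
  by exists Gs; split=> //; apply: Tc_Meet.
- by exists Gs; split=> //; apply: Tc_Sub hc st.
Qed.

Lemma typ_typc_subst_inv :
  (forall M G D sigma t, wf_basis G -> wf_ctx D ->
     typ G D (subst_v sigma M) t -> ex_env G D sigma (fun Gs => typ Gs D M t)) /\
  (forall c G D sigma t, wf_basis G -> wf_ctx D ->
     typc G D (subst_v_c sigma c) t -> ex_env G D sigma (fun Gs => typc Gs D c t)).
Proof.
apply: term_cmd_ind => /=.
- move=> x G D sigma t wfG wfD hx; exists (set_nth Om [::] x t); split.
  + move=> y; rewrite nth_set_nth /=; case: eqP => _; first exact: typ_isD wfG wfD hx.
    by rewrite nth_nil.
  + by move=> y; rewrite nth_set_nth /=; case: eqP => [->|_] //; rewrite nth_nil; apply: T_Om.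
  + by have := T_Ax (set_nth Om [::] x t) D x; rewrite nth_set_nth /= eqxx.
- move=> M IH G D sigma t wfG wfD; move: t; apply: typ_lam_ind; first exact: ex_env_typ_closed.
  move=> dl k r hdl /(IH _ _ _ _ (wf_basis_cons hdl wfG) wfD) [Gs [wfGs hs hM]].
  exists (behead Gs); split.
  + by move=> x; rewrite nth_behead.
  + by move=> x; rewrite nth_behead; apply: typ_shift_v_inv wfG (hs x.+1).
  + apply: (T_Abs hdl (typ_weaken _ (le_ctx_refl wfD) hM)).
    case=> [|x] /=; first exact: typ_var_le (wf_basis_cons hdl wfG) (hs 0).
    by rewrite nth_behead; apply: leD_refl.
- move=> M IHM N IHN G D sigma t wfG wfD; move: t.
  apply: typ_app_ind; first exact: ex_env_typ_closed.
  move=> dl k r /(IHM _ _ _ _ wfG wfD) hM /(IHN _ _ _ _ wfG wfD) hN.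
  have [Gs [wfGs hs [hM' hN']]] :=
    ex_env_pair (typ_basis_antitone (M := M) wfD) (typ_basis_antitone (M := N) wfD) hM hN.
  by exists Gs; split=> //; apply: T_App hM' hN'.
- move=> c IH G D sigma t wfG wfD; move: t; apply: typ_mu_ind; first exact: ex_env_typ_closed.
  move=> k k' r hk /(IH _ _ _ _ wfG (wf_ctx_cons hk wfD)) [Gs [wfGs hs hc]].
  exists Gs; split=> //; last exact: T_Mu hk hc.
  by move=> x; apply: typ_shift_n_inv wfG wfD hk (hs x).
- move=> a M IH G D sigma t wfG wfD; move: t; apply: typc_named_ind.
    exact: ex_env_typc_closed.
  move=> dl /(IH _ _ _ _ wfG wfD) [Gs [wfGs hs hM]].
  by exists Gs; split=> //; apply: T_Cmd.
Qed.

(** * Generation lemmas *)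

Definition cmd_typable G D c r := exists k, typc G D c (Times (Arr k r) k).

(* What an arrow component [k -> Psi a] of a type of [Lam M], [App M N] or
   [Mu c] says about the immediate subterms. *)
Definition lam_arrow G D M k a := typ (ty_hd k :: G) D M (Arr (ty_tl k) (Psi a)).
Definition app_arrow G D M N k a :=
  exists2 dl, isD dl & typ G D M (Arr (Times dl k) (Psi a)) /\ typ G D N dl.
Definition mu_arrow G D c k a :=
  exists2 k', isC k' & typc G (k :: D) c (Times (Arr k' (Psi a)) k').

Lemma lam_arrow_closed G D M : wf_basis G -> wf_ctx D -> arrow_closed (lam_arrow G D M).
Proof.
move=> wfG wfD; rewrite /lam_arrow.
split=> [k k' a b kk' ba hM|k /ty_hd_tl_sort/andP[_ htl]|k a b].
- have [hd tl] := le_C_hd_tl kk'; apply: T_Sub (le_D_arr tl (le_R_Psi ba)).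
  exact: typ_weaken (le_basis_cons hd (le_basis_refl wfG)) (le_ctx_refl wfD) hM.
- exact: T_Sub (T_Om _ _ _) (le_D_Om_arr htl).
- move=> /ty_hd_tl_sort/andP[_ htl] /= h1 h2.
  exact: T_Sub (T_Meet h1 h2) (le_D_arr_join a b (leC_refl htl) (leC_refl htl)).
Qed.

Lemma app_arrow_closed G D M N : arrow_closed (app_arrow G D M N).
Proof.
split=> [k k' a b kk' ba [dl hdl [hM hN]]|k hk|k a b hk [d1 hd1 [M1 N1]] [d2 hd2 [M2 N2]]].
- exists dl => //; split=> //.
  exact: T_Sub hM (le_D_arr (leC_times_r hdl kk') (le_R_Psi ba)).
- exists Om => //; split; last exact: T_Om.
  exact: T_Sub (T_Om _ _ _) (le_D_Om_arr (k := Times Om k) hk).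
- exists (Meet d1 d2); first by rewrite /= hd1 hd2.
  split; last exact: T_Meet.
  apply: T_Sub (T_Meet M1 M2) (le_D_arr_join a b _ _).
    exact: leC_times_l (leD_meetl hd1 hd2) hk.
  exact: leC_times_l (leD_meetr hd1 hd2) hk.
Qed.

Lemma mu_arrow_closed G D c : wf_basis G -> wf_ctx D -> arrow_closed (mu_arrow G D c).
Proof.
move=> wfG wfD; split=> [k k' a b kk' ba [k0 hk0 hc]|k _|k a b _ [k1 hk1 c1] [k2 hk2 c2]].
- exists k0 => //.
  apply: Tc_Sub (typc_weaken (le_basis_refl wfG) (le_ctx_cons kk' (le_ctx_refl wfD)) hc) _.
  exact: leC_times_l (le_D_arr (leC_refl hk0) (le_R_Psi ba)) hk0.
- exists Om => //; apply: Tc_Sub (Tc_Om _ _ _) (leC_trans leC_omtimes _).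
  exact: leC_times_l (le_D_Om_arr _) _.
- exists (Meet k1 k2); first by rewrite /= hk1 hk2.
  have hA1 : isD (Arr k1 (Psi a)) by rewrite /= hk1.
  have hA2 : isD (Arr k2 (Psi b)) by rewrite /= hk2.
  apply: Tc_Sub (Tc_Meet c1 c2) (leC_trans (leC_timesmeet hA1 hA2 hk1 hk2) _).
  apply: leC_times_l; last by rewrite /= hk1 hk2.
  exact: le_D_arr_join a b (leC_meetl hk1 hk2) (leC_meetr hk1 hk2).
Qed.

Lemma typ_lam_arr G D M k r : wf_basis G -> wf_ctx D ->
  typ G D (Lam M) (Arr k r) -> typ (ty_hd k :: G) D M (Arr (ty_tl k) r).
Proof.
move=> wfG wfD h; have /andP[hk hr] : isC k && isR r := typ_isD wfG wfD h.
have /andP[_ htl] := ty_hd_tl_sort hk.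
have: arrows_in (lam_arrow G D M) (Arr k r).
  move: (Arr k r) h; apply: typ_lam_ind.
    exact: arrows_in_D_closed (lam_arrow_closed M wfG wfD).
  move=> dl k' r' hdl hM.
  have /andP[hk' hr'] : isC k' && isR r' := typ_isD (wf_basis_cons hdl wfG) wfD hM.
  exact: T_Sub hM (le_D_arr_cpt hk' hr').1.
by move=> /= hM; apply: T_Sub hM (le_D_arr_cpt htl hr).2.
Qed.

Lemma typ_app_arr G D M N k r : wf_basis G -> wf_ctx D -> typ G D (App M N) (Arr k r) ->
  exists2 dl, isD dl & typ G D M (Arr (Times dl k) r) /\ typ G D N dl.
Proof.
move=> wfG wfD h; have /andP[hk hr] : isC k && isR r := typ_isD wfG wfD h.
have: arrows_in (app_arrow G D M N) (Arr k r).
  move: (Arr k r) h; apply: typ_app_ind.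
    exact: arrows_in_D_closed (app_arrow_closed G D M N).
  move=> dl k' r' hM hN.
  have /andP[hk' hr'] : isC (Times dl k') && isR r' := typ_isD wfG wfD hM.
  have /andP[hdl _] := hk'.
  by exists dl => //; split=> //; apply: T_Sub hM (le_D_arr_cpt hk' hr').1.
move=> /= [dl hdl [hM hN]]; exists dl => //; split=> //.
have hk' : isC (Times dl k) by rewrite /= hdl hk.
exact: T_Sub hM (le_D_arr_cpt hk' hr).2.
Qed.

Lemma typ_mu_arr G D c k r : wf_basis G -> wf_ctx D ->
  typ G D (Mu c) (Arr k r) -> cmd_typable G (k :: D) c r.
Proof.
move=> wfG wfD h; have /andP[hk hr] : isC k && isR r := typ_isD wfG wfD h.
have: arrows_in (mu_arrow G D c) (Arr k r).
  move: (Arr k r) h; apply: typ_mu_ind.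
    exact: arrows_in_D_closed (mu_arrow_closed c wfG wfD).
  move=> k1 k' r' hk1 hc.
  have /andP[/andP[hk' hr'] _] : (isC k' && isR r') && isC k' :=
    typc_isC wfG (wf_ctx_cons hk1 wfD) hc.
  by exists k' => //; apply: Tc_Sub hc (leC_times_l (le_D_arr_cpt hk' hr').1 hk').
move=> /= [k' hk' hc]; exists k'.
exact: Tc_Sub hc (leC_times_l (le_D_arr_cpt hk' hr).2 hk').
Qed.

(** * Structural substitution *)

(* The context in which [M] is typed when [M[a <= L]] is typed in [D] and
   [L : d]: the name [a] receives the extra argument type [d]. *)
Definition ctx_ext D a d := set_nth Om D a (Times d (nth Om D a)).

Lemma nth_ctx_ext D a d b :
  nth Om (ctx_ext D a d) b = if b == a then Times d (nth Om D a) else nth Om D b.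
Proof. by rewrite /ctx_ext nth_set_nth. Qed.

Lemma ctx_ext_wf D a d : wf_ctx D -> isD d -> wf_ctx (ctx_ext D a d).
Proof. by move=> wfD hd b; rewrite nth_ctx_ext; case: eqP => _ //=; rewrite hd wfD. Qed.

Lemma le_ctx_ext D a d' d : wf_ctx D -> le_D d' d -> le_ctx (ctx_ext D a d') (ctx_ext D a d).
Proof.
move=> wfD dd b; rewrite !nth_ctx_ext; case: eqP => _.
  exact: leC_times_l dd (wfD a).
exact: leC_refl (wfD b).
Qed.

Definition ctx_antitone (J : seq T -> Prop) := forall D1 D1', le_ctx D1' D1 -> J D1 -> J D1'.

Lemma typ_ctx_antitone G M t : wf_basis G -> ctx_antitone (fun D1 => typ G D1 M t).
Proof. by move=> wfG D1 D1' le; apply: typ_weaken (le_basis_refl wfG) le. Qed.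

Definition ex_ext G D a L (J : seq T -> Prop) :=
  exists d, [/\ isD d, typ G D L d & J (ctx_ext D a d)].

Lemma ex_ext_pair G D a L (J1 J2 : seq T -> Prop) : wf_ctx D ->
  ctx_antitone J1 -> ctx_antitone J2 ->
  ex_ext G D a L J1 -> ex_ext G D a L J2 -> ex_ext G D a L (fun D1 => J1 D1 /\ J2 D1).
Proof.
move=> wfD anti1 anti2 [d1 [hd1 L1 J1d1]] [d2 [hd2 L2 J2d2]].
exists (Meet d1 d2); split; [by rewrite /= hd1 hd2 | exact: T_Meet |].
split; [apply: anti1 J1d1 | apply: anti2 J2d2]; apply: le_ctx_ext wfD _.
  exact: leD_meetl.
exact: leD_meetr.
Qed.

Lemma ex_ext_typ_closed G D a L M : wf_basis G -> wf_ctx D ->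
  D_closed (fun t => ex_ext G D a L (fun D1 => typ G D1 M t)).
Proof.
move=> wfG wfD; have anti t := typ_ctx_antitone (M := M) (t := t) wfG.
split=> [|s t hs ht|s t st [d [hd hL hM]]].
- by exists Om; split; [| apply: T_Om | apply: T_Om].
- have [d [hd hL [hMs hMt]]] := ex_ext_pair wfD (anti s) (anti t) hs ht.
  by exists d; split=> //; apply: T_Meet.
- by exists d; split=> //; apply: T_Sub hM st.
Qed.

Lemma typ_ssub :
  (forall M G D a d L t, wf_basis G -> wf_ctx D -> isD d -> typ G D L d ->
     typ G (ctx_ext D a d) M t -> typ G D (ssub a L M) t) /\
  (forall c G D a d L r, wf_basis G -> wf_ctx D -> isD d -> typ G D L d ->
     cmd_typable G (ctx_ext D a d) c r -> cmd_typable G D (ssub_c a L c) r).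
Proof.
apply: term_cmd_ind => /=.
- move=> x G D a d L t _ _ _ _; move: t.
  by apply: typ_var_ind; [apply: typ_D_closed | apply: T_Ax].
- move=> M IH G D a d L t wfG wfD hd hL; move: t.
  apply: typ_lam_ind; first exact: typ_D_closed.
  move=> dl k r hdl hM; apply: (T_Abs hdl).
  exact: IH _ _ _ _ _ _ (wf_basis_cons hdl wfG) wfD hd (typ_shift_v dl wfG hL) hM.
- move=> M IHM N IHN G D a d L t wfG wfD hd hL; move: t.
  apply: typ_app_ind; first exact: typ_D_closed.
  move=> dl k r hM hN.
  exact: T_App (IHM _ _ _ _ _ _ wfG wfD hd hL hM) (IHN _ _ _ _ _ _ wfG wfD hd hL hN).
- move=> c IH G D a d L t wfG wfD hd hL; move: t; apply: typ_mu_ind; first exact: typ_D_closed.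
  move=> k k' r hk hc.
  have [k'' hc''] := IH G (k :: D) a.+1 d (ren_n S L) r wfG (wf_ctx_cons hk wfD) hd
    (typ_shift_n k wfG wfD hL) (ex_intro _ k' hc).
  exact: T_Mu hk hc''.
- move=> b P IH G D a d L r wfG wfD hd hL [k hc].
  have [d1 hP le1] := typc_named_inv wfG (ctx_ext_wf a wfD hd) hc.
  have [/= le_d1 le_b] := le_C_hd_tl le1.
  have /andP[_ /andP[_ hr]] : isD d1 && (isC k && isR r) := le_D_sort le_d1.
  move/(IH _ _ _ _ _ _ wfG wfD hd hL): hP => hP; rewrite nth_ctx_ext in le_b le1.
  case: (PeanoNat.Nat.eqb_spec b a) => [eba|nba].
  + subst b; rewrite eqxx in le_b; exists (nth Om D a); apply: T_Cmd; apply: T_App hL.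
    exact: T_Sub hP (leD_trans le_d1 (le_D_arr le_b (leR_refl hr))).
  + exists k; apply: Tc_Sub (T_Cmd b hP) _.
    by move: le1; case: eqP.
Qed.

Lemma typ_ssub_inv :
  (forall M G D a L t, wf_basis G -> wf_ctx D ->
     typ G D (ssub a L M) t -> ex_ext G D a L (fun D1 => typ G D1 M t)) /\
  (forall c G D a L r, wf_basis G -> wf_ctx D ->
     cmd_typable G D (ssub_c a L c) r -> ex_ext G D a L (fun D1 => cmd_typable G D1 c r)).
Proof.
apply: term_cmd_ind => /=.
- move=> x G D a L t _ _ hx; exists Om; split=> //; first exact: T_Om.
  by move: t hx; apply: typ_var_ind; [apply: typ_D_closed | apply: T_Ax].
- move=> M IH G D a L t wfG wfD; move: t; apply: typ_lam_ind; first exact: ex_ext_typ_closed.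
  move=> dl k r hdl /(IH _ _ _ _ _ (wf_basis_cons hdl wfG) wfD) [d [hd hL hM]].
  by exists d; split=> //; [apply: typ_shift_v_inv wfG hL | apply: T_Abs hdl hM].
- move=> M IHM N IHN G D a L t wfG wfD; move: t.
  apply: typ_app_ind; first exact: ex_ext_typ_closed.
  move=> dl k r /(IHM _ _ _ _ _ wfG wfD) hM /(IHN _ _ _ _ _ wfG wfD) hN.
  have [d [hd hL [hM' hN']]] :=
    ex_ext_pair wfD (typ_ctx_antitone (M := M) wfG) (typ_ctx_antitone (M := N) wfG) hM hN.
  by exists d; split=> //; apply: T_App hM' hN'.
- move=> c IH G D a L t wfG wfD; move: t; apply: typ_mu_ind; first exact: ex_ext_typ_closed.
  move=> k k' r hk hc.
  have [d [hd hL [k'' hc'']]] :=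
    IH G (k :: D) a.+1 (ren_n S L) r wfG (wf_ctx_cons hk wfD) (ex_intro _ k' hc).
  by exists d; split=> //; [apply: typ_shift_n_inv wfG wfD hk hL | apply: T_Mu hk hc''].
- move=> b P IH G D a L r wfG wfD; case: (PeanoNat.Nat.eqb_spec b a) => [->|nba] [k hc].
  + have [d1 hA le1] := typc_named_inv wfG wfD hc.
    have [/= le_d1 le_a] := le_C_hd_tl le1.
    have /andP[_ /andP[_ hr]] : isD d1 && (isC k && isR r) := le_D_sort le_d1.
    have [d0 hd0 [hP hL0]] := typ_app_arr wfG wfD (T_Sub hA le_d1).
    have [d2 [hd2 hL2 hP2]] := IH _ _ _ _ _ wfG wfD hP.
    exists (Meet d0 d2); split; [by rewrite /= hd0 hd2 | exact: T_Meet |].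
    exists (nth Om (ctx_ext D a (Meet d0 d2)) a); apply: T_Cmd.
    rewrite nth_ctx_ext eqxx.
    apply: T_Sub (typ_weaken (le_basis_refl wfG) (le_ctx_ext a wfD (leD_meetr hd0 hd2)) hP2) _.
    exact: le_D_arr (le_C_Times (leD_meetl hd0 hd2) le_a) (leR_refl hr).
  + have [d1 hP le1] := typc_named_inv wfG wfD hc.
    have [d [hd hL hP']] := IH _ _ _ _ _ wfG wfD hP.
    exists d; split=> //; exists k; apply: Tc_Sub (T_Cmd b hP') _.
    by rewrite nth_ctx_ext; case: eqP.
Qed.

(** * Invariance under reduction and expansion *)

Definition typ_incl M M' :=
  forall G D t, wf_basis G -> wf_ctx D -> typ G D M t -> typ G D M' t.

(* Commands are compared only through the types [(k -> r) x k] used by the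
   mu rule: the rule [[a]mu b.C -> C[a/b]] does not preserve the other ones. *)
Definition cmd_incl c c' :=
  forall G D r, wf_basis G -> wf_ctx D -> cmd_typable G D c r -> cmd_typable G D c' r.

Lemma typ_beta_red M N : typ_incl (App (Lam M) N) (beta_subst M N).
Proof.
move=> G D t wfG wfD; move: t; apply: typ_app_ind; first exact: typ_D_closed.
move=> dl k r /(typ_lam_arr wfG wfD) /= hM hN.
apply: (typ_typc_subst.1 _ _ _ _ hM _ _ wfG wfD).
by case=> [|x] /=; [apply: hN | apply: T_Ax].
Qed.

Lemma typ_beta_exp M N : typ_incl (beta_subst M N) (App (Lam M) N).
Proof.
move=> G D t wfG wfD h.
have [Gs [wfGs hs hM]] := typ_typc_subst_inv.1 _ _ _ _ _ wfG wfD h.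
have ht := typ_isD wfGs wfD hM.
have {}hM : typ (nth Om Gs 0 :: G) D M t.
  apply: typ_weaken _ (le_ctx_refl wfD) hM.
  by case=> [|x] /=; [apply: leD_refl | apply: typ_var_le wfG (hs x.+1)].
apply: (D_closed_arrows (typ_D_closed _ _ _) ht).
apply: arrows_in_impl (arrows_in_self ht) => k a [hk le].
exact: T_App (T_Abs (wfGs 0) (T_Sub hM le)) (hs 0).
Qed.

Lemma typ_mu_red c N : typ_incl (App (Mu c) N) (Mu (ssub_c 0 (ren_n S N) c)).
Proof.
move=> G D t wfG wfD; move: t; apply: typ_app_ind; first exact: typ_D_closed.
move=> dl k r hc hN.
have /andP[/andP[hdl hk] _] : (isD dl && isC k) && isR r := typ_isD wfG wfD hc.
have [k'' hc''] := typ_ssub.2 c G (k :: D) 0 dl (ren_n S N) r wfG (wf_ctx_cons hk wfD) hdl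
  (typ_shift_n k wfG wfD hN) (typ_mu_arr wfG wfD hc).
exact: T_Mu hk hc''.
Qed.

Lemma typ_mu_exp c N : typ_incl (Mu (ssub_c 0 (ren_n S N) c)) (App (Mu c) N).
Proof.
move=> G D t wfG wfD h; have ht := typ_isD wfG wfD h.
apply: (D_closed_arrows (typ_D_closed _ _ _) ht).
apply: arrows_in_impl (arrows_in_self ht) => k a [hk le].
have [d [hd hN [k' hc]]] :=
  typ_ssub_inv.2 _ _ _ _ _ _ wfG (wf_ctx_cons hk wfD) (typ_mu_arr wfG wfD (T_Sub h le)).
apply: T_App (typ_shift_n_inv wfG wfD hk hN).
by apply: T_Mu hc; rewrite /= hd hk.
Qed.

Lemma typc_ren_red a c : cmd_incl (Named a (Mu c)) (name_subst a c).
Proof.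
move=> G D r wfG wfD [k hc]; have [d hMu le] := typc_named_inv wfG wfD hc.
have [/= le_d le_a] := le_C_hd_tl le.
have [k' hc'] := typ_mu_arr wfG wfD (T_Sub hMu le_d).
exists k'; apply: (typ_typc_ren_n.2 _ _ _ _ hc' wfG).
by case=> [|b] //=; apply: leC_refl.
Qed.

Lemma typc_ren_exp a c : cmd_incl (name_subst a c) (Named a (Mu c)).
Proof.
move=> G D r wfG wfD [k hc].
have hc' : typc G (nth Om D a :: D) c (Times (Arr k r) k).
  apply: (typ_typc_ren_n_inv.2 _ _ _ _ _ _ wfG wfD _ hc).
  by case=> [|b] /=; apply: leC_refl.
by exists (nth Om D a); apply: T_Cmd; apply: T_Mu hc'.
Qed.

Lemma typ_incl_refl M : typ_incl M M.
Proof. by []. Qed.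

Lemma typ_incl_trans M N P : typ_incl M N -> typ_incl N P -> typ_incl M P.
Proof. by move=> MN NP G D t wfG wfD /MN /NP; apply. Qed.

Lemma typ_incl_lam M M' : typ_incl M M' -> typ_incl (Lam M) (Lam M').
Proof.
move=> MM' G D t wfG wfD; move: t; apply: typ_lam_ind; first exact: typ_D_closed.
by move=> dl k r hdl /(MM' _ _ _ (wf_basis_cons hdl wfG) wfD); apply: T_Abs.
Qed.

Lemma typ_incl_app M M' N N' :
  typ_incl M M' -> typ_incl N N' -> typ_incl (App M N) (App M' N').
Proof.
move=> MM' NN' G D t wfG wfD; move: t; apply: typ_app_ind; first exact: typ_D_closed.
by move=> dl k r /(MM' _ _ _ wfG wfD) hM /(NN' _ _ _ wfG wfD); apply: T_App.
Qed.

Lemma typ_incl_mu c c' : cmd_incl c c' -> typ_incl (Mu c) (Mu c').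
Proof.
move=> cc' G D t wfG wfD; move: t; apply: typ_mu_ind; first exact: typ_D_closed.
move=> k k' r hk hc.
have [k'' hc''] := cc' _ _ _ wfG (wf_ctx_cons hk wfD) (ex_intro _ k' hc).
exact: T_Mu hk hc''.
Qed.

Lemma cmd_incl_named a M M' : typ_incl M M' -> cmd_incl (Named a M) (Named a M').
Proof.
move=> MM' G D r wfG wfD [k hc]; have [d hM le] := typc_named_inv wfG wfD hc.
by exists k; apply: Tc_Sub (T_Cmd a (MM' _ _ _ wfG wfD hM)) le.
Qed.

Lemma step_typ_incl :
  (forall M M', step M M' -> typ_incl M M' /\ typ_incl M' M) /\
  (forall c c', step_c c c' -> cmd_incl c c' /\ cmd_incl c' c).
Proof.
apply: step_step_c_min.
- by move=> M N; split; [apply: typ_beta_red | apply: typ_beta_exp].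
- by move=> c N; split; [apply: typ_mu_red | apply: typ_mu_exp].
- by move=> M M' _ [? ?]; split; apply: typ_incl_lam.
- by move=> M M' N _ [? ?]; split; apply: typ_incl_app _ (typ_incl_refl (M := N)).
- by move=> M N N' _ [? ?]; split; apply: typ_incl_app (typ_incl_refl (M := M)) _.
- by move=> c c' _ [? ?]; split; apply: typ_incl_mu.
- by move=> a c; split; [apply: typc_ren_red | apply: typc_ren_exp].
- by move=> a M M' _ [? ?]; split; apply: cmd_incl_named.
Qed.

Lemma lm_eq_typ_incl M N : lm_eq M N -> typ_incl M N /\ typ_incl N M.
Proof.
elim=> {M N} [M N /step_typ_incl.1 //|M|M N _ [? ?] //|M N P _ [MN NM] _ [NP PN]].
  by split; apply: typ_incl_refl.
by split; [apply: typ_incl_trans MN NP | apply: typ_incl_trans PN NM].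
Qed.

End Typing.

Theorem theorem5p1 (disp : Order.disp_t) (K : bJoinSemilatticeType disp)
  (enc : K -> nat) (enc_inj : injective enc)
  (G D : seq (ty K)) (M N : term) (dl : ty K) :
  all isD G -> all isC D ->
  lm_eq M N -> typ G D M dl -> typ G D N dl.
Proof.
move=> hG hD hMN.
exact: (lm_eq_typ_incl hMN).1 _ _ _ (wf_basis_all hG) (wf_ctx_all hD).
Qed.
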